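(* Let $F$ be a non-Archimedean local field with $\mathrm{char}(F)\neq2$, $K$ an étale $F$-algebra of degree $2$, and $L_K=\mathcal{O}_K\times\mathcal{O}_F\times\mathcal{O}_F\subseteq V_K$. Then $\mathrm{sn}_F(\mathrm{O}(L_K))=\mathrm{sn}_F(\mathrm{SO}(L_K))$, and this group equals $F^\times\bmod(F^\times)^2$ if $K/F$ is a ramified quadratic field extension, and $\mathcal{O}_F^\times\bmod(F^\times)^2$ otherwise (i.e. if $K$ is an unramified field extension or $K=F\times F$).
   Context: An étale $F$-algebra of degree $2$ is a quadratic field extension of $F$ or $F\times F$; $\alpha'$ denotes the conjugate of $\alpha\in K$, $\mathrm{N}_{K/F}(\alpha)=\alpha\alpha'$, and $\mathcal{O}_K$ is the ring of integers ($\mathcal{O}_F\times\mathcal{O}_F$ if $K=F\times F$). $V_K=K\oplus F\oplus F$ with quadratic form $q(\alpha,b,c)=\mathrm{N}_{K/F}(\alpha)-bc$. The spinor norm $\mathrm{sn}_F\colon\mathrm{O}(V)\to F^\times/(F^\times)^2$ is the unique homomorphism sending the reflection $\tau_a(v)=v-2\frac{\langle a,v\rangle}{\langle a,a\rangle}a$ ($q(a)\neq 0$, $\langle v,v\rangle=2q(v)$) to $q(a)$ mod squares. $\mathrm{O}(L_K)$, $\mathrm{SO}(L_K)$ denote the elements of $\mathrm{O}(V_K)$, $\mathrm{SO}(V_K)$ preserving $L_K$. *)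

From mathcomp Require Import all_boot all_order all_algebra.
Set Implicit Arguments. Unset Strict Implicit. Unset Printing Implicit Defensive.
Import Order.TTheory GRing.Theory Num.Theory.
Local Open Scope ring_scope.

Section LocalField.
Variable F : fieldType.

(** A normalized discrete valuation v : F^x ->> Z (the value at 0 is irrelevant). *)
Definition is_dval (v : F -> int) : Prop :=
  [/\ forall x y, x != 0 -> y != 0 -> v (x * y) = v x + v y,
      forall x y, x != 0 -> y != 0 -> x + y != 0 ->
        (v x <= v (x + y)) \/ (v y <= v (x + y)) &
      exists pi, pi != 0 /\ v pi = 1].

(** x lies in pi^n O_F *)
Definition vge (v : F -> int) (x : F) (n : int) : bool := (x == 0) || (n <= v x).
Definition intF (v : F -> int) (x : F) : bool := vge v x 0.
Definition unitF (v : F -> int) (x : F) : bool := (x != 0) && (v x == 0).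

Definition v_complete (v : F -> int) : Prop :=
  forall u : nat -> F,
    (forall N : int, exists M, forall m n, (M <= m)%N -> (M <= n)%N -> vge v (u m - u n) N) ->
    exists l, forall N : int, exists M, forall n, (M <= n)%N -> vge v (u n - l) N.

(** the residue field O_F / m_F is finite *)
Definition finite_residue (v : F -> int) : Prop :=
  exists s : seq F, forall x, intF v x -> exists2 y, y \in s & vge v (x - y) 1.

Definition nonarch_local_field (v : F -> int) : Prop :=
  [/\ is_dval v, v_complete v & finite_residue v].

(** The etale quadratic algebra K = F[t]/(t^2 - d), d != 0; alpha = a + b sqrt d. *)
Definition normK (d a b : F) : F := a ^+ 2 - d * b ^+ 2.
Definition traceK (a : F) : F := 2 * a.
Definition K_is_field (d : F) : Prop := ~ exists y : F, y ^+ 2 = d.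
(** O_K: elements whose characteristic polynomial t^2 - tr t + N has coefficients in O_F *)
Definition in_OK (v : F -> int) (d a b : F) : bool :=
  intF v (traceK a) && intF v (normK d a b).
(** K/F is a ramified quadratic field extension: ramification index 2, i.e. the
    extended valuation v_K(alpha) = v(N alpha)/2 takes a non-integral value. *)
Definition K_ramified (v : F -> int) (d : F) : Prop :=
  K_is_field d /\ exists a b : F, (a != 0 \/ b != 0) /\ odd `|v (normK d a b)|%N.

(** V_K = K + F + F, vectors (a, b, c, e) with alpha = a + b sqrt d *)
Definition cf (x : 'rV[F]_4) (k : nat) : F := x ord0 (inord k).
Definition qform (d : F) (x : 'rV[F]_4) : F :=
  normK d (cf x 0) (cf x 1) - cf x 2 * cf x 3.
(** <u,w> with <w,w> = 2 q(w) *)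
Definition bform (d : F) (u w : 'rV[F]_4) : F := qform d (u + w) - qform d u - qform d w.
Definition refl (d : F) (a w : 'rV[F]_4) : 'rV[F]_4 :=
  w - (2 * bform d a w / bform d a a) *: a.

Definition inL (v : F -> int) (d : F) (x : 'rV[F]_4) : bool :=
  [&& in_OK v d (cf x 0) (cf x 1), intF v (cf x 2) & intF v (cf x 3)].

Definition OL (v : F -> int) (d : F) (g : 'M[F]_4) : Prop :=
  [/\ g \in unitmx,
      forall x, qform d (x *m g) = qform d x &
      forall x, inL v d (x *m g) = inL v d x].
Definition SOL (v : F -> int) (d : F) (g : 'M[F]_4) : Prop :=
  OL v d g /\ \det g = 1.

(** x in F^x lies in (the preimage in F^x of) sn_F(G): some g in G is a product of
    reflections tau_{a_1} ... tau_{a_k} with x = q(a_1)...q(a_k) mod squares. *)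
Definition sn_image (d : F) (G : 'M[F]_4 -> Prop) (x : F) : Prop :=
  x != 0 /\ exists g, G g /\
    exists s : seq 'rV[F]_4,
      [/\ all (fun a => qform d a != 0) s,
          forall w, w *m g = foldr (refl d) w s &
          exists y, y != 0 /\ x = (\prod_(a <- s) qform d a) * y ^+ 2].

End LocalField.

From HB Require Import structures.
From mathcomp Require Import all_boot all_order all_algebra.
From mathcomp Require Import ring zify.
From Stdlib Require Import Classical.
Set Implicit Arguments. Unset Strict Implicit. Unset Printing Implicit Defensive.
Import Order.TTheory GRing.Theory Num.Theory.
Local Open Scope ring_scope.

(* Identify V_K with the hermitian 2 x 2 matrices over K via
   w = (alpha, c, e) |-> H(w) = [[c, alpha], [conj alpha, e]], so that det H(w) = - q(w).
   A reflection tau_a acts as H |-> q(a)^-1 H(a) adj(H) H(a); hence a product of an even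
   number of reflections with spinor norm lam acts as H |-> lam^-1 P H P^* with
   det P = lam.  Odd products are padded with tau_(0,0,1,-1), which lies in O(L_K) and has
   spinor norm 1.  If the product preserves L_K, evaluating it on a few vectors of L_K shows
   that lam^-1 times suitable products of entries of P is integral (norms of entries when K
   is an unramified field, entries under the two projections K -> F when K = F x F), and
   comparing with det P = lam forces v(lam) to be even.
   Conversely tau_(m,0,0) tau_(0,0,1,-u) lies in SO(L_K) and has spinor norm N(m) u
   whenever alpha |-> (m / conj m) conj alpha preserves O_K; this holds for m = 1, and for
   every m when K is a field.  If K is ramified some N(m) has odd valuation, so every class
   of F^x / (F^x)^2 is attained. *)

Lemma int_parity (z : int) : exists k, if odd `|z|%N then z = k + k + 1 else z = k + k.
Proof.
have e := odd_double_half `|z|%N; rewrite -addnn in e.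
exists (if 0 <= z then Posz (`|z|%N./2) else - Posz (`|z|%N./2) - (odd `|z|%N)%:Z).
by move: e; case: (odd _); case: ifP; lia.
Qed.

Section DiscreteValuation.
Variables (F : fieldType) (v : F -> int).
Hypothesis v_dval : is_dval v.

Lemma dvalM x y : x != 0 -> y != 0 -> v (x * y) = v x + v y.
Proof. by case: v_dval => + _ _; apply. Qed.

Lemma dval1 : v 1 = 0.
Proof.
have := dvalM (oner_neq0 F) (oner_neq0 F).
by rewrite mulr1 => h; apply/(addrI (v 1)); rewrite addr0 -h.
Qed.

Lemma dvalV x : x != 0 -> v x^-1 = - v x.
Proof. by move=> x0; have := dvalM x0 (invr_neq0 x0); rewrite mulfV // dval1; lia. Qed.

Lemma dvalX x n : x != 0 -> v (x ^+ n) = v x *+ n.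
Proof.
move=> x0; elim: n => [|n IH]; first by rewrite expr0 dval1.
by rewrite exprS dvalM ?expf_neq0 // IH mulrS.
Qed.

Lemma dvalN x : x != 0 -> v (- x) = v x.
Proof.
move=> x0; have : v ((- x) ^+ 2) = v (x ^+ 2) by rewrite sqrrN.
by rewrite !dvalX ?oppr_eq0 // !mulr2n; lia.
Qed.

Lemma dval_surj m : exists2 y, y != 0 & v y = m.
Proof.
case: v_dval => _ _ [pi [pi0 vpi]]; case: m => k.
  by exists (pi ^+ k); rewrite ?expf_neq0 // dvalX // vpi; lia.
exists (pi ^+ k.+1)^-1; first by rewrite invr_eq0 expf_neq0.
by rewrite dvalV ?expf_neq0 // dvalX // vpi NegzE; lia.
Qed.

Lemma unitF_divX2 x t : x != 0 -> t != 0 -> v x = v t + v t -> unitF v (x / t ^+ 2).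
Proof.
move=> x0 t0 vx; rewrite /unitF mulf_neq0 ?invr_eq0 ?expf_neq0 //=; apply/eqP.
by rewrite dvalM ?invr_eq0 ?expf_neq0 // dvalV ?expf_neq0 // dvalX // vx mulr2n subrr.
Qed.

Lemma vge0 n : vge v 0 n.
Proof. by rewrite /vge eqxx. Qed.

Lemma vgeE x n : x != 0 -> vge v x n = (n <= v x).
Proof. by move=> x0; rewrite /vge (negbTE x0). Qed.

Lemma vgeW x m n : n <= m -> vge v x m -> vge v x n.
Proof. by move=> nm; rewrite /vge; case: (x == 0) => //= /(le_trans nm). Qed.

Lemma vgeN x n : vge v (- x) n = vge v x n.
Proof.
have [->|x0] := eqVneq x 0; first by rewrite oppr0.
by rewrite !vgeE ?oppr_eq0 // dvalN.
Qed.

Lemma vgeD x y n : vge v x n -> vge v y n -> vge v (x + y) n.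
Proof.
have [->|x0] := eqVneq x 0; first by rewrite add0r.
have [->|y0] := eqVneq y 0; first by rewrite addr0.
have [->|s0] := eqVneq (x + y) 0; first by rewrite vge0.
rewrite !vgeE // => hx hy.
by case: v_dval => _ /(_ x y x0 y0 s0) [] h _; apply: le_trans h.
Qed.

Lemma vgeB x y n : vge v x n -> vge v y n -> vge v (x - y) n.
Proof. by move=> hx hy; apply: vgeD; rewrite ?vgeN. Qed.

Lemma vgeM x y m n : vge v x m -> vge v y n -> vge v (x * y) (m + n).
Proof.
have [->|x0] := eqVneq x 0; first by rewrite mul0r !vge0.
have [->|y0] := eqVneq y 0; first by rewrite mulr0 !vge0.
by rewrite !vgeE ?mulf_neq0 // dvalM //; apply: lerD.
Qed.

Lemma vge_unitl u x n : unitF v u -> vge v (u * x) n = vge v x n.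
Proof.
case/andP=> u0 /eqP vu; have [->|x0] := eqVneq x 0; first by rewrite mulr0 !vge0.
by rewrite !vgeE ?mulf_neq0 // dvalM // vu add0r.
Qed.

Lemma vge_mulr x t m : t != 0 -> vge v (x * t) m = vge v x (m - v t).
Proof.
move=> t0; have [->|x0] := eqVneq x 0; first by rewrite mul0r !vge0.
rewrite !vgeE ?mulf_neq0 // dvalM //.
by move: (v x) (v t) => a b; clear; apply/idP/idP; lia.
Qed.

Lemma vge_all_eq0 x : (forall n, vge v x n) -> x = 0.
Proof. by have [//|x0 /(_ (v x + 1))] := eqVneq x 0; rewrite vgeE //; lia. Qed.

Lemma intF1 : intF v 1.
Proof. by rewrite /intF vgeE ?oner_neq0 // dval1. Qed.

Lemma dval2_ge0 : (2 : F) != 0 -> 0 <= v 2.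
Proof. by move=> two0; have := vgeD intF1 intF1; rewrite vgeE. Qed.

Lemma unitF_1subr t : vge v t 1 -> unitF v (1 - t).
Proof.
move=> t1; have t0 : vge v t 0 by apply: vgeW t1.
have not1 : ~~ vge v 1 1 by rewrite vgeE ?oner_neq0 // dval1.
have ht0 : 1 - t != 0.
  by apply: contraNneq not1 => /eqP; rewrite subr_eq0 => /eqP {1}->.
apply/andP; split => //.
have : ~~ vge v (1 - t) 1 by apply: contra not1 => /vgeD /(_ t1); rewrite subrK.
have := vgeB intF1 t0; rewrite !vgeE //; move: (v _) => z; clear=> z0 z1; apply/eqP; lia.
Qed.

Lemma intF_root x y : intF v (x + y) -> intF v (x * y) -> intF v x.
Proof.
rewrite /intF => hT hN; have [->|x0] := eqVneq x 0; first exact: vge0.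
rewrite vgeE //; case: (lerP 0 (v x)) => // hx.
have : vge v ((x + y) * x - x * y) (v x).
  apply: vgeB; first by rewrite -[v x]add0r; apply: vgeM; rewrite // vgeE.
  by apply: vgeW hN; lia.
rewrite (_ : _ - _ = x ^+ 2); last by ring.
by rewrite vgeE ?expf_neq0 // dvalX //; lia.
Qed.

End DiscreteValuation.

Section Hensel.
Variables (F : fieldType) (v : F -> int).
Hypotheses (v_dval : is_dval v) (v_compl : v_complete v).
Variable c : F.
Hypothesis c_pos : vge v c 1.

(* The map x |-> 1 - c / x contracts the units, and its fixed point is a root of X^2 - X + c. *)
Fixpoint hensel_seq n := if n is n'.+1 then 1 - c / hensel_seq n' else 1.

Lemma hensel_seq_unit n : unitF v (hensel_seq n).
Proof.
elim: n => [|n /andP [u0 /eqP vu]] /=; first by rewrite /unitF oner_neq0 dval1.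
apply: unitF_1subr => //; rewrite -[1]addr0; apply: vgeM => //.
by rewrite vgeE ?invr_eq0 // dvalV // vu.
Qed.

Lemma hensel_seq_step n : vge v (hensel_seq n.+1 - hensel_seq n) n.+1.
Proof.
elim: n => [|n IH]; first by rewrite /= divr1 addrC addKr vgeN.
have /andP [u0 /eqP vu] := hensel_seq_unit n.
have /andP [u1 /eqP vu1] := hensel_seq_unit n.+1.
have -> : hensel_seq n.+2 - hensel_seq n.+1
    = c * (hensel_seq n.+1 - hensel_seq n) * (hensel_seq n * hensel_seq n.+1)^-1.
  rewrite (_ : _ - _ = 1 - c / hensel_seq n.+1 - (1 - c / hensel_seq n)) //.
  by field; rewrite u0 u1.
have uinv : vge v (hensel_seq n * hensel_seq n.+1)^-1 0.
  by rewrite vgeE ?invr_eq0 ?mulf_neq0 // dvalV ?mulf_neq0 // dvalM // vu vu1.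
by apply: vgeW (vgeM v_dval (vgeM v_dval c_pos IH) uinv); lia.
Qed.

Lemma hensel_seq_cauchy n k : vge v (hensel_seq (n + k) - hensel_seq n) n.+1.
Proof.
elim: k => [|k IH]; first by rewrite addn0 subrr vge0.
rewrite addnS -(subrK (hensel_seq (n + k)) (hensel_seq _)) -addrA.
by apply: (vgeD v_dval) => //; apply: vgeW (hensel_seq_step _); lia.
Qed.

Lemma hensel_root : exists l, l ^+ 2 - l + c = 0.
Proof.
have [l hl] : exists l, forall N : int,
    exists M, forall n, (M <= n)%N -> vge v (hensel_seq n - l) N.
  apply: v_compl => N; exists `|N|%N => m n hm hn.
  have [nm|mn] := leqP n m.
    by rewrite -(subnKC nm); apply: vgeW (hensel_seq_cauchy _ _); lia.
  rewrite -(subnKC (ltnW mn)) -opprB vgeN //.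
  by apply: vgeW (hensel_seq_cauchy _ _); lia.
exists l; apply: vge_all_eq0 => N.
have [M hM] := hl (Posz `|N|%N).
have /andP [u0 /eqP vu] := hensel_seq_unit M.
have lM : vge v (l - hensel_seq M) `|N|%N by rewrite -opprB vgeN // hM.
have lM1 : vge v (l - hensel_seq M.+1) `|N|%N by rewrite -opprB vgeN // hM.
have l1 : vge v (l - 1) 0.
  rewrite -(subrK (hensel_seq M) l) -addrA; apply: (vgeD v_dval); first exact: vgeW lM.
  by apply: (vgeB v_dval); [rewrite vgeE // vu | exact: intF1].
have -> : l ^+ 2 - l + c
    = (l - 1) * (l - hensel_seq M) + hensel_seq M * (l - hensel_seq M.+1).
  by rewrite (_ : hensel_seq M.+1 = 1 - c / hensel_seq M) //; field.
apply: (vgeD v_dval); first by apply: vgeW (vgeM v_dval l1 lM); lia.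
by apply: vgeW (vgeM v_dval (_ : vge v (hensel_seq M) 0) lM1); [lia | rewrite vgeE // vu].
Qed.

End Hensel.

Section FieldIntegers.
Variables (F : fieldType) (v : F -> int) (d : F).
Hypotheses (v_dval : is_dval v) (v_compl : v_complete v).
Hypotheses (two0 : (2 : F) != 0) (K_field : K_is_field d).

(* If 2a had negative valuation, a suitable rescaling of X^2 - 2aX + N would have a root
   in F by Hensel, producing a square root of d. *)
Lemma intF_trace a b : intF v (normK d a b) -> intF v (traceK a).
Proof.
move=> hN; rewrite /intF /traceK; apply/negPn/negP => hT.
have a0 : a != 0 by apply: contraNneq hT => ->; rewrite mulr0 vge0.
have ta0 : 2 * a != 0 by rewrite mulf_neq0.
have vT : v (2 * a) < 0 by move: hT; rewrite vgeE //; lia.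
have [b0|b0] := eqVneq b 0.
  move: hN vT; rewrite /intF /normK b0 expr0n /= mulr0 subr0 vgeE ?expf_neq0 //.
  by rewrite dvalX // dvalM // => h; have := dval2_ge0 v_dval two0; lia.
pose c := normK d a b / (2 * a) ^+ 2.
have c_pos : vge v c 1.
  have [N0|N0] := eqVneq (normK d a b) 0; first by rewrite /c N0 mul0r vge0.
  move: hN vT; rewrite /intF /c !vgeE ?mulf_neq0 ?invr_eq0 ?expf_neq0 //.
  rewrite [v (_ / _)]dvalM ?invr_eq0 ?expf_neq0 ?mulf_neq0 //.
  by rewrite dvalV ?expf_neq0 ?mulf_neq0 // dvalX ?mulf_neq0 //; lia.
have [l hl] := hensel_root v_dval v_compl c_pos.
apply: K_field; exists ((2 * a * l - a) / b).
have -> : d = ((2 * a * l - a) / b) ^+ 2 - (2 * a / b) ^+ 2 * (l ^+ 2 - l + c).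
  by rewrite /c /normK; field; rewrite b0 a0 two0.
by rewrite hl mulr0 subr0.
Qed.

Lemma in_OK_normE a b : in_OK v d a b = intF v (normK d a b).
Proof.
by rewrite /in_OK; case hN: (intF v (normK d a b)); rewrite ?andbF // (intF_trace hN).
Qed.

End FieldIntegers.

(* [(a, b) : quad d] stands for a + b sqrt d; this models K also when d is a square. *)
Definition quad (F : fieldType) (d : F) : Type := (F * F)%type.
HB.instance Definition _ (F : fieldType) (d : F) :=
  GRing.Zmodule.copy (quad d) (F * F)%type.

Section QuadRing.
Variables (F : fieldType) (d : F).
Local Notation K := (quad d).

Definition quad_mul (x y : K) : K := (x.1 * y.1 + d * x.2 * y.2, x.1 * y.2 + x.2 * y.1).
Definition quad_one : K := (1, 0).

Lemma quad_mulA : associative quad_mul.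
Proof. by move=> [a b] [c e] [f g]; congr pair; rewrite /=; ring. Qed.
Lemma quad_mulC : commutative quad_mul.
Proof. by move=> [a b] [c e]; congr pair; rewrite /=; ring. Qed.
Lemma quad_mul1l : left_id quad_one quad_mul.
Proof. by move=> [a b]; congr pair; rewrite /=; ring. Qed.
Lemma quad_mulDl : left_distributive quad_mul +%R.
Proof. by move=> [a b] [c e] [f g]; congr pair; rewrite /=; ring. Qed.
Lemma quad_one_neq0 : quad_one != 0.
Proof. by apply/eqP => -[/eqP]; rewrite oner_eq0. Qed.

End QuadRing.

HB.instance Definition _ (F : fieldType) (d : F) :=
  GRing.Zmodule_isComNzRing.Build (quad d) (@quad_mulA F d) (@quad_mulC F d)
    (@quad_mul1l F d) (@quad_mulDl F d) (@quad_one_neq0 F d).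

Section QuadTheory.
Variables (F : fieldType) (d : F).
Local Notation K := (quad d).

Definition quadF (c : F) : K := (c, 0).
Definition qconj (x : K) : K := (x.1, - x.2).
Definition qnorm (x : K) : F := normK d x.1 x.2.

Lemma quadM_fst (x y : K) : (x * y).1 = x.1 * y.1 + d * x.2 * y.2. Proof. by []. Qed.
Lemma quadM_snd (x y : K) : (x * y).2 = x.1 * y.2 + x.2 * y.1. Proof. by []. Qed.
Lemma quadD_fst (x y : K) : (x + y).1 = x.1 + y.1. Proof. by []. Qed.
Lemma quadD_snd (x y : K) : (x + y).2 = x.2 + y.2. Proof. by []. Qed.
Lemma quadN_fst (x : K) : (- x).1 = - x.1. Proof. by []. Qed.
Lemma quadN_snd (x : K) : (- x).2 = - x.2. Proof. by []. Qed.
Definition quadE :=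
  (quadM_fst, quadM_snd, quadD_fst, quadD_snd, quadN_fst, quadN_snd).

Lemma quad_ext (x y : K) : x.1 = y.1 -> x.2 = y.2 -> x = y.
Proof. by case: x y => [a b] [c e] /= -> ->. Qed.

Lemma quadFM a b : quadF (a * b) = quadF a * quadF b.
Proof. by apply: quad_ext; rewrite /= ?quadE /=; ring. Qed.
Lemma quadF1 : quadF 1 = 1. Proof. by []. Qed.

Lemma qconjD x y : qconj (x + y) = qconj x + qconj y.
Proof. by apply: quad_ext; rewrite /= ?opprD. Qed.
Lemma qconjN x : qconj (- x) = - qconj x. Proof. by []. Qed.
Lemma qconjB x y : qconj (x - y) = qconj x - qconj y.
Proof. by rewrite qconjD qconjN. Qed.
Lemma qconjM x y : qconj (x * y) = qconj x * qconj y.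
Proof. by apply: quad_ext; rewrite /= ?quadE /=; ring. Qed.
Lemma qconjK x : qconj (qconj x) = x.
Proof. by case: x => a b; rewrite /qconj /= opprK. Qed.
Lemma qconjF c : qconj (quadF c) = quadF c.
Proof. by rewrite /qconj /= oppr0. Qed.

Lemma qnormM x y : qnorm (x * y) = qnorm x * qnorm y.
Proof. by case: x y => a b [c e]; rewrite /qnorm /normK /=; ring. Qed.
Lemma qnorm_conj x : qnorm (qconj x) = qnorm x.
Proof. by case: x => a b; rewrite /qnorm /normK /=; ring. Qed.
Lemma qnormF c : qnorm (quadF c) = c ^+ 2.
Proof. by rewrite /qnorm /normK /=; ring. Qed.
Lemma qnormB x y : qnorm (x - y) = qnorm x + qnorm y - traceK (x * qconj y).1.
Proof. by case: x y => a b [c e]; rewrite /qnorm /normK /traceK /= ?quadE /=; ring. Qed.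

End QuadTheory.

Section Matrix2.
Variables (F : fieldType) (d : F).
Local Notation K := (quad d).

(* A record rather than 'M[K]_2, so that entrywise identities are closed by [ring]. *)
Record mx2 := Mx2 { m11 : K; m12 : K; m21 : K; m22 : K }.

Definition mx2_one : mx2 := Mx2 1 0 0 1.
Definition mx2_mul (A B : mx2) : mx2 :=
  Mx2 (m11 A * m11 B + m12 A * m21 B) (m11 A * m12 B + m12 A * m22 B)
      (m21 A * m11 B + m22 A * m21 B) (m21 A * m12 B + m22 A * m22 B).
Definition mx2_scale (k : K) (A : mx2) : mx2 :=
  Mx2 (k * m11 A) (k * m12 A) (k * m21 A) (k * m22 A).
Definition mx2_adj (A : mx2) : mx2 := Mx2 (m22 A) (- m12 A) (- m21 A) (m11 A).
Definition mx2_star (A : mx2) : mx2 :=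
  Mx2 (qconj (m11 A)) (qconj (m21 A)) (qconj (m12 A)) (qconj (m22 A)).
Definition mx2_det (A : mx2) : K := m11 A * m22 A - m12 A * m21 A.

Lemma mx2_mulA A B C : mx2_mul A (mx2_mul B C) = mx2_mul (mx2_mul A B) C.
Proof. by case: A B C => [a b c e] [f g h i] [j k l m]; congr Mx2; rewrite /=; ring. Qed.
Lemma mx2_mul1l A : mx2_mul mx2_one A = A.
Proof. by case: A => a b c e; congr Mx2; rewrite /=; ring. Qed.
Lemma mx2_mul1r A : mx2_mul A mx2_one = A.
Proof. by case: A => a b c e; congr Mx2; rewrite /=; ring. Qed.
Lemma mx2_scale_mull k A B : mx2_mul (mx2_scale k A) B = mx2_scale k (mx2_mul A B).
Proof. by case: A B => [a b c e] [f g h i]; congr Mx2; rewrite /=; ring. Qed.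
Lemma mx2_scale_mulr k A B : mx2_mul A (mx2_scale k B) = mx2_scale k (mx2_mul A B).
Proof. by case: A B => [a b c e] [f g h i]; congr Mx2; rewrite /=; ring. Qed.
Lemma mx2_scaleA k l A : mx2_scale k (mx2_scale l A) = mx2_scale (k * l) A.
Proof. by case: A => [a b c e]; congr Mx2; rewrite /=; ring. Qed.
Lemma mx2_scale1 A : mx2_scale 1 A = A.
Proof. by case: A => [a b c e]; rewrite /mx2_scale /= !mul1r. Qed.

Lemma mx2_adjM A B : mx2_adj (mx2_mul A B) = mx2_mul (mx2_adj B) (mx2_adj A).
Proof. by case: A B => [a b c e] [f g h i]; congr Mx2; rewrite /=; ring. Qed.
Lemma mx2_adjK A : mx2_adj (mx2_adj A) = A.
Proof. by case: A => [a b c e]; rewrite /mx2_adj /= !opprK. Qed.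
Lemma mx2_adj_scale k A : mx2_adj (mx2_scale k A) = mx2_scale k (mx2_adj A).
Proof. by case: A => [a b c e]; congr Mx2; rewrite /=; ring. Qed.

Lemma mx2_starM A B : mx2_star (mx2_mul A B) = mx2_mul (mx2_star B) (mx2_star A).
Proof. by case: A B => [a b c e] [f g h i]; congr Mx2; rewrite /= !qconjD !qconjM; ring. Qed.
Lemma mx2_starK A : mx2_star (mx2_star A) = A.
Proof. by case: A => [a b c e]; rewrite /mx2_star /= !qconjK. Qed.
Lemma mx2_star_adj A : mx2_star (mx2_adj A) = mx2_adj (mx2_star A).
Proof. by case: A => [a b c e]; rewrite /mx2_star /mx2_adj /= !qconjN. Qed.
Lemma mx2_star1 : mx2_star mx2_one = mx2_one.
Proof. by rewrite /mx2_star /= -quadF1 qconjF -[0]/(quadF d 0) qconjF. Qed.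

Lemma mx2_detM A B : mx2_det (mx2_mul A B) = mx2_det A * mx2_det B.
Proof. by case: A B => [a b c e] [f g h i]; rewrite /mx2_det /=; ring. Qed.
Lemma mx2_det_adj A : mx2_det (mx2_adj A) = mx2_det A.
Proof. by case: A => [a b c e]; rewrite /mx2_det /=; ring. Qed.
Lemma mx2_det_star A : mx2_det (mx2_star A) = qconj (mx2_det A).
Proof. by case: A => [a b c e]; rewrite /mx2_det /= qconjB !qconjM; ring. Qed.

Lemma iter_mx2_adj n A : iter n mx2_adj A = if odd n then mx2_adj A else A.
Proof. by elim: n => //= n ->; case: (odd n); rewrite ?mx2_adjK. Qed.

End Matrix2.

Section Coordinates.
Variable F : fieldType.

Definition mk4 (a b c e : F) : 'rV[F]_4 := \row_(j < 4) nth 0 [:: a; b; c; e] j.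

Lemma cf_mk4_0 a b c e : cf (mk4 a b c e) 0 = a. Proof. by rewrite /cf mxE inordK. Qed.
Lemma cf_mk4_1 a b c e : cf (mk4 a b c e) 1 = b. Proof. by rewrite /cf mxE inordK. Qed.
Lemma cf_mk4_2 a b c e : cf (mk4 a b c e) 2 = c. Proof. by rewrite /cf mxE inordK. Qed.
Lemma cf_mk4_3 a b c e : cf (mk4 a b c e) 3 = e. Proof. by rewrite /cf mxE inordK. Qed.
Definition cf_mk4 := (cf_mk4_0, cf_mk4_1, cf_mk4_2, cf_mk4_3).

Lemma cfD (x y : 'rV[F]_4) k : cf (x + y) k = cf x k + cf y k.
Proof. by rewrite /cf mxE. Qed.
Lemma cfB (x y : 'rV[F]_4) k : cf (x - y) k = cf x k - cf y k.
Proof. by rewrite /cf !mxE. Qed.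
Lemma cfZ t (x : 'rV[F]_4) k : cf (t *: x) k = t * cf x k.
Proof. by rewrite /cf mxE. Qed.

Lemma row4P (x y : 'rV[F]_4) : (forall k, (k < 4)%N -> cf x k = cf y k) -> x = y.
Proof. by move=> e; apply/rowP => j; have := e j (ltn_ord j); rewrite /cf inord_val. Qed.

End Coordinates.

Section Reflections.
Variables (F : fieldType) (d : F).
Hypothesis two0 : (2 : F) != 0.
Local Notation K := (quad d).

Lemma bformE a w : bform d a w
  = 2 * (cf a 0 * cf w 0 - d * cf a 1 * cf w 1) - (cf a 2 * cf w 3 + cf a 3 * cf w 2).
Proof. by rewrite /bform /qform /normK !cfD; ring. Qed.

Lemma refl_cf a w k : qform d a != 0 ->
  cf (refl d a w) k = cf w k - bform d a w / qform d a * cf a k.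
Proof.
move=> qa; rewrite /refl cfB cfZ (_ : bform d a a = 2 * qform d a).
  by congr (_ - _ * _); field; rewrite qa two0.
by rewrite bformE /qform /normK; ring.
Qed.

Lemma qform_refl a w : qform d a != 0 -> qform d (refl d a w) = qform d w.
Proof.
move=> qa; rewrite /qform !refl_cf // bformE.
by move: qa; rewrite /qform /normK => qa; field.
Qed.

Lemma qform_foldr_refl s w :
  all (fun a => qform d a != 0) s -> qform d (foldr (refl d) w s) = qform d w.
Proof. by elim: s => //= a s IH /andP [qa /IH <-]; rewrite qform_refl. Qed.

Definition herm (w : 'rV[F]_4) : mx2 d :=
  Mx2 (quadF d (cf w 2)) (cf w 0, cf w 1) (qconj ((cf w 0, cf w 1) : K)) (quadF d (cf w 3)).

Lemma mx2_star_herm w : mx2_star (herm w) = herm w.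
Proof. by rewrite /mx2_star /herm /= !qconjF qconjK. Qed.

Lemma mx2_det_herm w : mx2_det (herm w) = quadF d (- qform d w).
Proof. by apply: quad_ext; rewrite /= ?quadE /qform /normK /=; ring. Qed.

Lemma herm_refl a w : qform d a != 0 -> herm (refl d a w)
  = mx2_scale (quadF d (qform d a)^-1)
      (mx2_mul (herm a) (mx2_mul (mx2_adj (herm w)) (herm a))).
Proof.
move=> qa; congr Mx2; apply: quad_ext; rewrite /= ?quadE /= ?refl_cf // ?bformE;
  by move: qa; rewrite /qform /normK => qa; field.
Qed.

Definition mx2_congr (P : mx2 d) (lam : F) (M : mx2 d) :=
  mx2_scale (quadF d lam^-1) (mx2_mul P (mx2_mul M (mx2_star P))).

Lemma herm_foldr_refl s : all (fun a => qform d a != 0) s ->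
  exists P, mx2_det P = quadF d ((-1) ^+ size s * \prod_(a <- s) qform d a) /\
    forall w, herm (foldr (refl d) w s)
      = mx2_congr P (\prod_(a <- s) qform d a) (iter (size s) (@mx2_adj F d) (herm w)).
Proof.
elim: s => [|a s IH] /=.
  move=> _; exists (mx2_one d); split.
    by rewrite big_nil mulr1; apply: quad_ext; rewrite /= ?quadE /=; ring.
  move=> w; rewrite /mx2_congr big_nil invr1 quadF1 mx2_star1.
  by rewrite mx2_mul1r mx2_mul1l mx2_scale1.
case/andP => qa /IH [P [detP hP]].
exists (mx2_mul (herm a) (mx2_adj (mx2_star P))); split.
  rewrite mx2_detM mx2_det_adj mx2_det_star detP qconjF mx2_det_herm -quadFM big_cons.
  by congr quadF; rewrite exprS; ring.
move=> w; rewrite herm_refl // hP big_cons /mx2_congr.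
rewrite mx2_starM mx2_star_adj mx2_starK mx2_star_herm mx2_adj_scale !mx2_adjM.
by rewrite mx2_scale_mull mx2_scale_mulr mx2_scaleA -quadFM -invfM !mx2_mulA.
Qed.

Lemma herm_foldr_refl_even s :
  all (fun a => qform d a != 0) s -> ~~ odd (size s) ->
  exists P, mx2_det P = quadF d (\prod_(a <- s) qform d a) /\
    forall w, herm (foldr (refl d) w s) = mx2_congr P (\prod_(a <- s) qform d a) (herm w).
Proof.
move=> /herm_foldr_refl [P [detP hP]] ev; exists P.
rewrite -signr_odd (negbTE ev) mul1r in detP.
by split => // w; rewrite hP iter_mx2_adj (negbTE ev).
Qed.

End Reflections.

Definition mx2_entry (F : fieldType) (d : F) (P : mx2 d) (i j : bool) : quad d :=
  if i then (if j then m22 P else m21 P) else (if j then m12 P else m11 P).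

Definition diag_unit {F : fieldType} (j : bool) : 'rV[F]_4 :=
  if j then mk4 0 0 0 1 else mk4 0 0 1 0.

Section DiagonalUnits.
Variables (F : fieldType) (v : F -> int) (d : F).
Hypothesis v_dval : is_dval v.

Lemma inL_diag_unit j : inL v d (diag_unit j).
Proof.
have := intF1 v_dval; rewrite /intF => h1.
case: j; rewrite /diag_unit /inL /in_OK /intF /traceK /normK !cf_mk4.
  by rewrite !mulr0 !expr0n /= !mulr0 !subr0 !vge0 h1.
by rewrite !mulr0 !expr0n /= !mulr0 !subr0 !vge0 h1.
Qed.

Lemma inL_herm_diag w i : inL v d w -> intF v (mx2_entry (herm d w) i i).1.
Proof. by case/and3P => _ h2 h3; case: i. Qed.

Lemma congr_diag_unit (P : mx2 d) lam i j :
  mx2_entry (mx2_congr P lam (herm d (diag_unit j))) i i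
  = quadF d (lam^-1 * qnorm (mx2_entry P i j)).
Proof.
by case: i j => [] []; apply: quad_ext;
  rewrite /= ?quadE /diag_unit /= !cf_mk4 /qnorm /normK /=; ring.
Qed.

End DiagonalUnits.

Section Unramified.
Variables (F : fieldType) (v : F -> int) (d : F).
Hypotheses (v_dval : is_dval v) (v_compl : v_complete v).
Hypotheses (two0 : (2 : F) != 0) (K_field : K_is_field d).
Local Notation K := (quad d).

Lemma qnorm_eq0 (x : K) : (qnorm x == 0) = (x == 0).
Proof.
apply/eqP/eqP => [|->]; last by rewrite /qnorm /normK /=; ring.
case: x => a b; rewrite /qnorm /normK /= => /eqP; rewrite subr_eq0 => /eqP e.
have [b0|b0] := eqVneq b 0.
  by move: e; rewrite b0 expr0n /= mulr0 => /eqP; rewrite expf_eq0 /= => /eqP ->.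
by case: K_field; exists (a / b); rewrite expr_div_n e; field.
Qed.

Lemma intF_qnorm_mulV (x : K) t : t != 0 ->
  intF v (qnorm (x * quadF d t^-1)) = vge v (qnorm x) (v t + v t).
Proof.
move=> t0; rewrite qnormM qnormF /intF vge_mulr ?expf_neq0 ?invr_eq0 //.
by rewrite dvalX ?invr_eq0 // dvalV //; congr vge; rewrite mulr2n; lia.
Qed.

Lemma vge_qnormB (x y : K) n :
  vge v (qnorm x) (n + n) -> vge v (qnorm y) (n + n) -> vge v (qnorm (x - y)) (n + n).
Proof.
have [t t0 <-] := dval_surj v_dval n.
rewrite -!intF_qnorm_mulV // mulrBl qnormB /intF => hx hy.
apply: (vgeB v_dval); first exact: (vgeD v_dval).
set z := _ * qconj _; apply: (intF_trace v_dval v_compl two0 K_field (b := z.2)).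
by rewrite -[normK _ _ _]/(qnorm z) qnormM qnorm_conj /intF -[0]addr0; apply: (vgeM v_dval).
Qed.

Hypothesis K_unram : forall x : K, x != 0 -> ~~ odd `|v (qnorm x)|%N.

(* For odd v lam, parity pushes the entry norms from lam O_F into pi lam O_F, and then
   N(det P) = lam^2 would be divisible by pi^2 lam^2. *)
Lemma dval_even_of_entry_qnorms (P : mx2 d) lam :
  lam != 0 -> mx2_det P = quadF d lam ->
  (forall i j, intF v (lam^-1 * qnorm (mx2_entry P i j))) -> exists k, v lam = k + k.
Proof.
move=> l0 detP hP; have [k] := int_parity (v lam).
case: ifP => _ vl; last by exists k.
have entry_big i j : vge v (qnorm (mx2_entry P i j)) ((k + 1) + (k + 1)).
  have [->|p0] := eqVneq (mx2_entry P i j) 0.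
    by rewrite /qnorm /normK /= expr0n /= mulr0 subr0 vge0.
  have n0 : qnorm (mx2_entry P i j) != 0 by rewrite qnorm_eq0.
  move: (hP i j) (K_unram p0); rewrite /intF vgeE ?mulf_neq0 ?invr_eq0 // vgeE //.
  rewrite dvalM ?invr_eq0 // dvalV // vl; have [e] := int_parity (v (qnorm (mx2_entry P i j))).
  by case: ifP => [_ _ _ // | _ -> h _]; lia.
have prod_big i j i' j' :
    vge v (qnorm (mx2_entry P i j * mx2_entry P i' j')) ((k + k + 2) + (k + k + 2)).
  by rewrite qnormM; apply: vgeW (vgeM v_dval (entry_big i j) (entry_big i' j')); lia.
have := vge_qnormB (prod_big false false true true) (prod_big false true true false).
rewrite -/(mx2_det P) detP qnormF vgeE ?expf_neq0 // dvalX // vl; lia.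
Qed.

Lemma dval_even_unramified (P : mx2 d) lam : lam != 0 -> mx2_det P = quadF d lam ->
  (forall w, inL v d w -> exists2 x, inL v d x & herm d x = mx2_congr P lam (herm d w)) ->
  exists k, v lam = k + k.
Proof.
move=> l0 detP hL; apply: dval_even_of_entry_qnorms l0 detP _ => i j.
have [x Lx hx] := hL _ (inL_diag_unit d v_dval j).
by have := inL_herm_diag i Lx; rewrite hx congr_diag_unit.
Qed.

End Unramified.

Section DetProducts.
Variables (F : fieldType) (v : F -> int).
Hypothesis v_dval : is_dval v.

Definition det2 (X : bool -> bool -> F) :=
  X false false * X true true - X false true * X true false.

Lemma det2_vge (X : bool -> bool -> F) n :
  [forall i, forall j, vge v (X i j) n] -> vge v (det2 X) (n + n).
Proof.
by move=> /forallP hX; apply: (vgeB v_dval); apply: (vgeM v_dval); apply: (forallP (hX _)).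
Qed.

(* For odd v lam = 2k + 1, both X and Y have an entry of valuation at most k. *)
Lemma dval_even_of_det2 (X Y : bool -> bool -> F) lam : lam != 0 ->
  det2 X = lam -> det2 Y = lam ->
  (forall i j i' j', intF v (lam^-1 * (X i j * Y i' j'))) -> exists k, v lam = k + k.
Proof.
move=> l0 dX dY hXY; have [k] := int_parity (v lam); case: ifP => _ vl; last by exists k.
have small Z : det2 Z = lam -> exists i j, Z i j != 0 /\ v (Z i j) <= k.
  move=> dZ; have /forallPn [i /forallPn [j]] : ~~ [forall i, forall j, vge v (Z i j) (k + 1)].
    by apply/negP => /det2_vge; rewrite dZ vgeE // vl; lia.
  rewrite /vge negb_or => /andP [z0 hz]; exists i, j; split => //; lia.
have [i [j [x0 vx]]] := small X dX; have [i' [j' [y0 vy]]] := small Y dY.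
move: (hXY i j i' j'); rewrite /intF vgeE ?mulf_neq0 ?invr_eq0 //.
by rewrite !dvalM ?mulf_neq0 ?invr_eq0 // dvalV // vl; lia.
Qed.

End DetProducts.

Section Split.
Variables (F : fieldType) (v : F -> int) (d s : F).
Hypotheses (v_dval : is_dval v) (two0 : (2 : F) != 0).
Hypotheses (s2 : s ^+ 2 = d) (s0 : s != 0).
Local Notation K := (quad d).

Definition qeval (x : K) : F := x.1 + x.2 * s.

Lemma qevalM x y : qeval (x * y) = qeval x * qeval y.
Proof. by rewrite /qeval !quadE -s2; ring. Qed.
Lemma qevalD x y : qeval (x + y) = qeval x + qeval y.
Proof. by rewrite /qeval !quadE; ring. Qed.
Lemma qevalB x y : qeval (x - y) = qeval x - qeval y.
Proof. by rewrite /qeval !quadE; ring. Qed.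
Lemma qevalF c : qeval (quadF d c) = c.
Proof. by rewrite /qeval /= mul0r addr0. Qed.

Lemma in_OK_split (x : K) : in_OK v d x.1 x.2 = intF v (qeval x) && intF v (qeval (qconj x)).
Proof.
have eT : traceK x.1 = qeval x + qeval (qconj x) by rewrite /traceK /qeval /=; ring.
have eN : normK d x.1 x.2 = qeval x * qeval (qconj x) by rewrite /normK /qeval /= -s2; ring.
rewrite /in_OK eT eN; apply/andP/andP => [[hT hN]|[h1 h2]]; split.
- exact: intF_root hT hN.
- by apply: (intF_root v_dval (y := qeval x)); rewrite (addrC, mulrC).
- exact: (vgeD v_dval).
- by rewrite /intF -[0]addr0; apply: (vgeM v_dval).
Qed.

(* [qeval] maps [herm d (split_unit b b')] to the matrix unit E_(b, b'). *)
Definition split_unit (b b' : bool) : 'rV[F]_4 :=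
  if b == b' then diag_unit b else mk4 2^-1 ((-1) ^+ b / (2 * s)) 0 0.

Lemma inL_split_unit b b' : inL v d (split_unit b b').
Proof.
have [->|] := eqVneq b b'; first by rewrite /split_unit eqxx inL_diag_unit.
rewrite /split_unit => /negPf ->; rewrite /inL !cf_mk4 (in_OK_split (_, _)) /intF !vge0 andbT.
have -> : qeval (2^-1, (-1) ^+ b / (2 * s)) = (~~ b)%:R.
  by case: b; rewrite /qeval /=; field; rewrite s0 two0.
have -> : qeval (qconj (2^-1, (-1) ^+ b / (2 * s))) = b%:R.
  by case: b; rewrite /qeval /=; field; rewrite s0 two0.
by have := intF1 v_dval; rewrite /intF => h1; case: b; rewrite /= vge0 h1.
Qed.

Lemma congr_split_unit (P : mx2 d) lam b b' i i' : lam != 0 ->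
  qeval (mx2_entry (mx2_congr P lam (herm d (split_unit b b'))) i i')
  = lam^-1 * (qeval (mx2_entry P i b) * qeval (qconj (mx2_entry P i' b'))).
Proof.
move=> l0; case: b b' i i' => [] [] [] [];
  rewrite /mx2_congr /herm /split_unit /diag_unit /= ?(qevalM, qevalD, qevalF) !cf_mk4;
  by rewrite /qeval /=; field; rewrite ?s0 ?two0 ?l0.
Qed.

Lemma inL_herm_qeval w i i' : inL v d w -> intF v (qeval (mx2_entry (herm d w) i i')).
Proof.
rewrite /inL (in_OK_split (_, _)) => /and3P [/andP [h0 h1] h2 h3].
by case: i i' => [] []; rewrite /qeval /= ?mul0r ?addr0.
Qed.

Lemma dval_even_split (P : mx2 d) lam : lam != 0 -> mx2_det P = quadF d lam ->
  (forall w, inL v d w -> exists2 x, inL v d x & herm d x = mx2_congr P lam (herm d w)) ->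
  exists k, v lam = k + k.
Proof.
move=> l0 detP hL.
apply: (dval_even_of_det2 v_dval (X := fun i j => qeval (mx2_entry P i j))
                                 (Y := fun i j => qeval (qconj (mx2_entry P i j))) l0).
- by rewrite /det2 /= -!qevalM -qevalB -/(mx2_det P) detP qevalF.
- by rewrite /det2 /= -!qevalM -qevalB -!qconjM -qconjB -/(mx2_det P) detP qconjF qevalF.
move=> i j i' j'; have [x Lx hx] := hL _ (inL_split_unit j j').
by have := inL_herm_qeval i i' Lx; rewrite hx congr_split_unit.
Qed.

End Split.

Section Determinants.
Variable R : comRingType.

Lemma det_mx22 (A : 'M[R]_2) : \det A = A 0 0 * A 1 1 - A 0 1 * A 1 0.
Proof.
rewrite (expand_det_row _ 0) !big_ord_recr big_ord0 /= add0r.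
rewrite /cofactor !det_mx11 !mxE /=.
have -> : (lift 0 0 : 'I_2) = 1 by apply: val_inj.
have -> : (lift (ord_max : 'I_2) 0 : 'I_2) = 0 by apply: val_inj.
have -> : (widen_ord (leqnSn 1) ord_max : 'I_2) = 0 by apply: val_inj.
have -> : (lift 0 0 : 'I_2) = 1 by apply: val_inj.
have -> : (ord_max : 'I_2) = 1 by apply: val_inj.
by rewrite /= expr0 expr1; ring.
Qed.

Lemma det_mx4_block (g : 'M[R]_4) :
  (forall i j : 'I_4, ((i < 2) != (j < 2))%N -> g i j = 0) ->
  \det g = (g 0 0 * g 1 1 - g 0 1 * g 1 0) * (g 2 2 * g 3 3 - g 2 3 * g 3 2).
Proof.
move=> g0; pose g' : 'M_(2 + 2) := g; rewrite (_ : \det g = \det g') //.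
have -> : g' = block_mx (ulsubmx g') 0 0 (drsubmx g').
  rewrite -{1}(submxK g'); congr block_mx; apply/matrixP => i j; rewrite !mxE g0 //=.
    by case: i j => [i hi] [j hj] /=; rewrite hi; case: j hj.
  by case: i j => [i hi] [j hj] /=; rewrite hj; case: i hi.
rewrite det_ublock !det_mx22 !mxE.
by congr (_ * _); congr (_ * _ - _ * _); congr (g _ _); apply: val_inj.
Qed.

End Determinants.

Section Construction.
Variables (F : fieldType) (d : F).
Hypothesis two0 : (2 : F) != 0.

Definition mat4 (rows : seq (seq F)) : 'M[F]_4 :=
  \matrix_(i < 4, j < 4) nth 0 (nth [::] rows i) j.

Lemma cf_mulmx_mat4 (w : 'rV[F]_4) rows k : (k < 4)%N ->
  cf (w *m mat4 rows) k = \sum_(i < 4) cf w i * nth 0 (nth [::] rows i) k.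
Proof.
by move=> k4; rewrite /cf !mxE; apply: eq_bigr => i _; rewrite mxE inordK // inord_val.
Qed.

Variables (m1 m2 u : F).
Hypotheses (m0 : normK d m1 m2 != 0) (u0 : u != 0).

(* m^2 / N(m) = rho1 + rho2 sqrt d for m = m1 + m2 sqrt d *)
Definition rho1 := (m1 ^+ 2 + d * m2 ^+ 2) / normK d m1 m2.
Definition rho2 := 2 * m1 * m2 / normK d m1 m2.

(* tau_(m,0,0) tau_(0,0,1,-u): alpha |-> - (m / conj m) conj alpha, (c, e) |-> (e / u, u c) *)
Definition twist_refls : seq 'rV[F]_4 := [:: mk4 m1 m2 0 0; mk4 0 0 1 (- u)].
Definition twist_mx : 'M[F]_4 :=
  mat4 [:: [:: - rho1; - rho2; 0; 0]; [:: d * rho2; rho1; 0; 0];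
           [:: 0; 0; 0; u]; [:: 0; 0; u^-1; 0]].

Lemma qform_mk4_m : qform d (mk4 m1 m2 0 0) = normK d m1 m2.
Proof. by rewrite /qform !cf_mk4; ring. Qed.
Lemma qform_mk4_u : qform d (mk4 0 0 1 (- u)) = u.
Proof. by rewrite /qform !cf_mk4 /normK; ring. Qed.

Lemma twist_refls_nonsingular : all (fun a => qform d a != 0) twist_refls.
Proof. by rewrite /= qform_mk4_m qform_mk4_u m0 u0. Qed.

Lemma prod_twist_refls : \prod_(a <- twist_refls) qform d a = normK d m1 m2 * u.
Proof. by rewrite !big_cons big_nil mulr1 qform_mk4_m qform_mk4_u. Qed.

Lemma twist_mxE w : w *m twist_mx = foldr (refl d) w twist_refls.
Proof.
have qm : qform d (mk4 m1 m2 0 0) != 0 by rewrite qform_mk4_m.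
have qu : qform d (mk4 0 0 1 (- u)) != 0 by rewrite qform_mk4_u.
move: m0; rewrite /normK => m0'.
apply: row4P => k k4; rewrite cf_mulmx_mat4 // !big_ord_recr big_ord0 /twist_refls /= add0r.
case: k k4 => [|[|[|[|k]]]] //= _;
  rewrite refl_cf // !bformE !refl_cf // ?bformE ?qform_mk4_m ?qform_mk4_u !cf_mk4;
  by rewrite /rho1 /rho2 /normK; field; rewrite ?u0 ?m0'.
Qed.

Lemma twist_mx_cf w :
  [/\ cf (w *m twist_mx) 0 = - rho1 * cf w 0 + d * rho2 * cf w 1,
      cf (w *m twist_mx) 1 = - rho2 * cf w 0 + rho1 * cf w 1,
      cf (w *m twist_mx) 2 = u^-1 * cf w 3 & cf (w *m twist_mx) 3 = u * cf w 2].
Proof. by rewrite !cf_mulmx_mat4 // !big_ord_recr !big_ord0 /=; split; ring. Qed.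

Lemma det_twist_mx : \det twist_mx = 1.
Proof.
move: m0; rewrite /normK => m0'.
rewrite det_mx4_block; last by move=> [[|[|[|[|i]]]] hi] [[|[|[|[|j]]]] hj] //= _; rewrite mxE.
by rewrite !mxE /= /rho1 /rho2 /normK; field; rewrite m0' u0.
Qed.

End Construction.

Section SpinorNorms.
Variables (F : fieldType) (v : F -> int) (d : F).
Hypotheses (v_dval : is_dval v) (v_compl : v_complete v).
Hypotheses (two0 : (2 : F) != 0) (d0 : d != 0).

Lemma sn_SOL_twist m1 m2 u y : normK d m1 m2 != 0 ->
  (forall a b, in_OK v d (- rho1 d m1 m2 * a + d * rho2 d m1 m2 * b)
                         (- rho2 d m1 m2 * a + rho1 d m1 m2 * b) = in_OK v d a b) ->
  unitF v u -> y != 0 -> sn_image d (SOL v d) (normK d m1 m2 * u * y ^+ 2).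
Proof.
move=> m0 OK_twist uU y0; have u0 : u != 0 by case/andP: uU.
have uVU : unitF v u^-1.
  by case/andP: uU => _ /eqP vu; rewrite /unitF invr_eq0 u0 dvalV // vu.
split; first by rewrite !mulf_neq0 ?expf_neq0.
exists (twist_mx d m1 m2 u); split.
  split; last exact: det_twist_mx.
  split; first by rewrite unitmxE (det_twist_mx m0 u0) unitr1.
    by move=> w; rewrite (twist_mxE two0 m0 u0) qform_foldr_refl // twist_refls_nonsingular.
  move=> w; rewrite /inL; have [-> -> -> ->] := twist_mx_cf d m1 m2 u w.
  rewrite OK_twist /intF (vge_unitl v_dval _ _ uVU) (vge_unitl v_dval _ _ uU).
  by rewrite [in X in _ && X]andbC.
exists (twist_refls m1 m2 u); split.
- exact: twist_refls_nonsingular.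
- by move=> w; rewrite (twist_mxE two0 m0 u0).
- by exists y; rewrite prod_twist_refls.
Qed.

Lemma sn_SOL_unit_square u y : unitF v u -> y != 0 -> sn_image d (SOL v d) (u * y ^+ 2).
Proof.
move=> uU y0; have N1 : normK d 1 0 = 1 by rewrite /normK; ring.
rewrite -(mul1r u) -{1}N1; apply: sn_SOL_twist => //; first by rewrite N1 oner_neq0.
rewrite /rho1 /rho2 N1 !divr1 => a b; rewrite /in_OK /traceK /intF.
by congr andb; [rewrite -(vgeN v_dval (2 * a)) | rewrite /normK]; congr vge; ring.
Qed.

Lemma sn_SOL_OL x : sn_image d (SOL v d) x -> sn_image d (OL v d) x.
Proof. by case=> x0 [g [[OLg _] hg]]; split => //; exists g. Qed.

(* tau_(0,0,1,-1) swaps the two hyperbolic coordinates. *)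
Definition hyp_swap : 'rV[F]_4 := mk4 0 0 1 (-1).

Lemma qform_hyp_swap : qform d hyp_swap = 1.
Proof. by rewrite /qform !cf_mk4 /normK; ring. Qed.

Lemma inL_refl_hyp_swap w : inL v d (refl d hyp_swap w) = inL v d w.
Proof.
have q1 : qform d hyp_swap != 0 by rewrite qform_hyp_swap oner_neq0.
rewrite /inL !refl_cf // bformE qform_hyp_swap !cf_mk4.
rewrite (_ : cf w 2 - _ = cf w 3); last by rewrite divr1; ring.
rewrite (_ : cf w 3 - _ = cf w 2); last by rewrite divr1; ring.
by rewrite !mulr0 !subr0 [in X in _ && X]andbC.
Qed.

Lemma OL_refl_even s g : all (fun a => qform d a != 0) s ->
  (forall w, w *m g = foldr (refl d) w s) -> (forall x, inL v d (x *m g) = inL v d x) ->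
  exists l, [/\ all (fun a => qform d a != 0) l, ~~ odd (size l),
     \prod_(a <- l) qform d a = \prod_(a <- s) qform d a &
     forall w, inL v d w -> inL v d (foldr (refl d) w l)].
Proof.
move=> sq gs gL; have Lfold w : inL v d w -> inL v d (foldr (refl d) w s) by rewrite -gs gL.
case so: (odd (size s)); last by exists s; rewrite so.
exists (rcons s hyp_swap); split.
- by rewrite all_rcons qform_hyp_swap oner_neq0.
- by rewrite size_rcons /= so.
- by rewrite -cats1 big_cat big_seq1 qform_hyp_swap; apply: mulr1.
- by move=> w Lw; rewrite foldr_rcons Lfold // inL_refl_hyp_swap.
Qed.

Lemma dval_even_sn_OL s : ~ K_ramified v d ->
  all (fun a => qform d a != 0) s -> ~~ odd (size s) ->
  (forall w, inL v d w -> inL v d (foldr (refl d) w s)) ->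
  exists k, v (\prod_(a <- s) qform d a) = k + k.
Proof.
move=> nR sq se sL; have [P [detP hP]] := herm_foldr_refl_even two0 sq se.
have l0 : \prod_(a <- s) qform d a != 0 by rewrite prodf_seq_neq0.
have PL w : inL v d w -> exists2 x, inL v d x &
    herm d x = mx2_congr P (\prod_(a <- s) qform d a) (herm d w).
  by move=> Lw; exists (foldr (refl d) w s); rewrite ?hP ?sL.
have [K_field|] := classic (K_is_field d).
  apply: (dval_even_unramified v_dval v_compl two0 K_field _ l0 detP PL).
  case=> a b /= ab0; apply/negP => odd_N; apply: nR; split => //.
  exists a, b; split => //; have [a0|] := eqVneq a 0; last by left.
  by right; apply: contra_neq ab0 => b0; rewrite a0 b0.
move=> /NNPP [t t2]; have t0 : t != 0 by apply: contra_neq d0 => t0; rewrite -t2 t0 expr0n.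
exact: (dval_even_split v_dval two0 t2 t0 l0 detP PL).
Qed.

Lemma sn_OL_unit_square x : ~ K_ramified v d -> sn_image d (OL v d) x ->
  exists u y : F, [/\ unitF v u, y != 0 & x = u * y ^+ 2].
Proof.
move=> nR [x0 [g [[_ _ gL] [s [sq gs [y [y0 ->]]]]]]].
have [l [lq le <- lL]] := OL_refl_even sq gs gL.
have [k vl] := dval_even_sn_OL nR lq le lL.
have [t t0 vt] := dval_surj v_dval k.
have l0 : \prod_(a <- l) qform d a != 0 by rewrite prodf_seq_neq0.
exists (\prod_(a <- l) qform d a / t ^+ 2), (t * y); split; last by field.
- by apply: unitF_divX2; rewrite // vl vt.
- by rewrite mulf_neq0.
Qed.

Lemma sn_SOL_ramified x : K_ramified v d -> x != 0 -> sn_image d (SOL v d) x.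
Proof.
move=> [K_field [a [b [ab0 oN]]]] x0.
have N0 : normK d a b != 0.
  rewrite -[normK _ _ _]/(qnorm (a, b)) (qnorm_eq0 K_field).
  by case: ab0 => ab0; apply: contra_neq ab0; [move/(congr1 fst) | move/(congr1 snd)].
have [k] := int_parity (v x); case: ifP => _ vx.
  have [j] := int_parity (v (normK d a b)); rewrite oN => vN.
  have [t t0 vt] := dval_surj v_dval (k - j).
  have -> : x = normK d a b * (x / normK d a b / t ^+ 2) * t ^+ 2 by field; rewrite N0 t0.
  apply: sn_SOL_twist => //.
    move=> a' b'; rewrite !in_OK_normE //; congr intF.
    by move: N0; rewrite /rho1 /rho2 /normK => N0; field.
  apply: unitF_divX2; rewrite ?mulf_neq0 ?invr_eq0 //.
  by rewrite dvalM ?invr_eq0 // dvalV // vx vN vt; lia.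
have [t t0 vt] := dval_surj v_dval k.
have -> : x = (x / t ^+ 2) * t ^+ 2 by field.
by apply: sn_SOL_unit_square => //; apply: unitF_divX2; rewrite // vx vt.
Qed.

End SpinorNorms.

Unset Implicit Arguments.

Theorem lemma2p4 (F : fieldType) (v : F -> int) (d : F) :
  nonarch_local_field v -> (2 : F) != 0 -> d != 0 ->
  (forall x : F, sn_image d (OL v d) x <-> sn_image d (SOL v d) x) /\
  (K_ramified v d -> forall x : F, sn_image d (OL v d) x <-> x != 0) /\
  (~ K_ramified v d -> forall x : F,
      sn_image d (OL v d) x <-> exists u y : F, [/\ unitF v u, y != 0 & x = u * y ^+ 2]).
Proof.
move=> [v_dval v_compl _] two0 d0.
have OL_unit_square := sn_OL_unit_square v_dval v_compl two0 d0.
have SOL_unit_square := sn_SOL_unit_square d v_dval two0.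
have SOL_ramified := sn_SOL_ramified v_dval v_compl two0 d0.
split; [|split].
- move=> x; split; last exact: sn_SOL_OL.
  move=> snx; have [ram|unram] := classic (K_ramified v d).
    by apply: SOL_ramified => //; case: snx.
  by have [u [y [uU y0 ->]]] := OL_unit_square x unram snx; apply: SOL_unit_square.
- move=> ram x; split; first by case.
  by move=> x0; apply/sn_SOL_OL/SOL_ramified.
- move=> unram x; split; first exact: OL_unit_square.
  by move=> [u [y [uU y0 ->]]]; apply/sn_SOL_OL/SOL_unit_square.
Qed.
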